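(* Let $G=(M,W,\Pi)$ be a many-to-many matching game with additive externalities. Any matching $\mathcal{A}$ in the optimistic stable set of $G$ is the union of two disjoint matchings, one on agent sets $(M',W')$ and one on $(M'',W'')$, where $M'\cup M''=M$ and $W'\cup W''=W$, such that every agent in $M'\cup W'$ obtains in $\mathcal{A}$ its highest possible utility, while the matching on $(M'',W'')$ is the empty matching.
   Context: Agents: $N=M\cup W$ with $M,W$ disjoint finite sets. A match is a pair $(m,w)$ with $m\in M$, $w\in W$; a (many-to-many) matching is any set of matches; the empty matching contains no matches. Forming a match requires consent of both endpoints; severing can be done unilaterally by either endpoint. A matching game with additive externalities is $G=(M,W,\Pi)$ where $\Pi(m,w\mid z)\in\mathbb{R}$ is the value agent $z$ receives from the formation of match $(m,w)$; utility is $u(z,\mathcal{A})=\sum_{(m,w)\in\mathcal{A}}\Pi(m,w\mid z)$. A coalition $B\subseteq N$ blocks $\mathcal{A}$ if, by rearranging matches among its members and deleting a (possibly empty) subset of its members' matches with agents in $N\setminus B$, with every member of $B$ performing at least one action (severing a match or forming a new match with another member of $B$), it makes at least one member strictly better off and no member worse off. Under optimistic reasoning, each member $i\in B$ evaluates a deviation assuming the agents in $N\setminus B$ organize themselves in the best possible way for $i$: they cut every match with a negative influence on $i$ and form every match with a positive influence on $i$ (including initiating matches with $i$ as an endpoint). A matching is in the optimistic stable set if no coalition blocks it under optimistic reasoning. *)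

From HB Require Import structures.
From mathcomp Require Import all_boot all_order all_algebra.
Set Implicit Arguments. Unset Strict Implicit. Unset Printing Implicit Defensive.
Import Order.TTheory GRing.Theory Num.Theory.
Local Open Scope ring_scope.

Section MatchingGame.
Variables (R : realDomainType) (M W : finType).
(* Agents are N = M + W (disjoint union); a match is a pair (m, w);
   a matching is a finite set of matches.
   Pi m w z = value agent z receives from the formation of match (m, w). *)
Variable Pi : M -> W -> (M + W)%type -> R.

Definition util (z : (M + W)%type) (A : {set M * W}) : R :=
  \sum_(p in A) Pi p.1 p.2 z.

Definition endpoint (z : (M + W)%type) (p : M * W) : bool :=
  (z == inl p.1) || (z == inr p.2).

Definition internal (B : {set (M + W)%type}) (p : M * W) : bool :=
  (inl p.1 \in B) && (inr p.2 \in B).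
Definition outside (B : {set (M + W)%type}) (p : M * W) : bool :=
  (inl p.1 \notin B) && (inr p.2 \notin B).
Definition cross (B : {set (M + W)%type}) (p : M * W) : bool :=
  ~~ internal B p && ~~ outside B p.

(* A deviation of B from A: S = the new set of matches among members of B
   (obtained by rearranging), C = the retained matches of A between members of B
   and N \ B (the others are deleted). *)
Definition valid_deviation (A : {set M * W}) (B : {set (M + W)%type})
  (S C : {set M * W}) : Prop :=
  S \subset [set p | internal B p] /\ C \subset [set p in A | cross B p].

(* member k performs at least one action: severs a match (internal or with an
   outsider) or forms a new match with another member of B *)
Definition acts (A : {set M * W}) (B : {set (M + W)%type})
  (S C : {set M * W}) (k : (M + W)%type) : Prop :=
  exists p : M * W, endpoint k p &&
    [|| p \in [set q in A | internal B q] :\: S,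
        p \in S :\: A
      | p \in [set q in A | cross B q] :\: C].

(* The matching member i of B expects under optimistic reasoning:
   the agents in N \ B cut every match with a negative influence on i and form
   every match with a positive influence on i (including matches with i). *)
Definition opt_outcome (A : {set M * W}) (B : {set (M + W)%type})
  (S C : {set M * W}) (i : (M + W)%type) : {set M * W} :=
  S
  :|: [set p | outside B p &&
               (((p \in A) && (0 <= Pi p.1 p.2 i)) || (0 < Pi p.1 p.2 i))]
  :|: [set p in C | 0 <= Pi p.1 p.2 i]
  :|: [set p | [&& cross B p, endpoint i p & 0 < Pi p.1 p.2 i]].

Definition blocks_opt (A : {set M * W}) (B : {set (M + W)%type}) : Prop :=
  exists S C : {set M * W},
    [/\ valid_deviation A B S C,
        (forall k, k \in B -> acts A B S C k),
        (forall i, i \in B -> util i A <= util i (opt_outcome A B S C i)) &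
        (exists2 i, i \in B & util i A < util i (opt_outcome A B S C i))].

Definition optimistic_stable (A : {set M * W}) : Prop :=
  forall B : {set (M + W)%type}, ~ blocks_opt A B.

End MatchingGame.

From HB Require Import structures.
From mathcomp Require Import all_boot all_order all_algebra.
Set Implicit Arguments. Unset Strict Implicit. Unset Printing Implicit Defensive.
Import Order.TTheory GRing.Theory Num.Theory.
Local Open Scope ring_scope.

(* An agent z with at least one match p0 in A can form the singleton coalition
   {z} and sever p0.  Reasoning optimistically, z expects every other match to
   be present exactly when it is profitable for z, i.e. z expects the sum of the
   positive parts of its values, which bounds z's utility in any matching.
   Stability forbids this deviation, so z already gets that bound in A.  Hence
   matched agents form (M', W') and the unmatched ones are left to the empty
   matching. *)

Section OptimisticStableSet.
Variables (R : realDomainType) (M W : finType).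
Variable Pi : M -> W -> (M + W)%type -> R.

Definition util_bound (z : (M + W)%type) : R :=
  \sum_(p : M * W) Num.max (Pi p.1 p.2 z) 0.

Lemma util_le_bound z (X : {set M * W}) : util Pi z X <= util_bound z.
Proof.
rewrite /util /util_bound big_mkcond /=; apply: ler_sum => p _.
by case: (p \in X); rewrite le_max lexx ?orbT.
Qed.

Lemma internal_set1 z (p : M * W) : internal [set z] p = false.
Proof. by rewrite /internal !in_set1; apply/negbTE/andP => -[/eqP <- /eqP]. Qed.

Lemma outside_set1 z (p : M * W) : outside [set z] p = ~~ endpoint z p.
Proof. by rewrite /outside /endpoint !in_set1 negb_or !(eq_sym z). Qed.

Lemma cross_set1 z (p : M * W) : cross [set z] p = endpoint z p.
Proof. by rewrite /cross internal_set1 outside_set1 negbK. Qed.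

Lemma util_opt_outcome_set1 (A C : {set M * W}) z :
  util Pi z (opt_outcome Pi A [set z] set0 C z) = util_bound z.
Proof.
set O := opt_outcome _ _ _ _ _ _.
have pos_in p : 0 < Pi p.1 p.2 z -> p \in O.
  move=> pos; rewrite !inE pos cross_set1 outside_set1 !orbT !andbT.
  by case: (endpoint z p); rewrite ?orbT.
have in_nneg p : p \in O -> 0 <= Pi p.1 p.2 z.
  rewrite !inE => /orP [/orP [/orP [//|] |] |].
  - by case/andP => _ /orP [/andP [_ ->] | /ltW ->].
  - by case/andP.
  - by case/and3P => _ _ /ltW.
rewrite /util /util_bound big_mkcond /=; apply: eq_bigr => p _.
case: ifP => [/in_nneg nneg | pO]; first by rewrite max_l.
by rewrite max_r // leNgt; apply: contraFN pO => /pos_in.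
Qed.

Lemma set1_blocks_opt (A : {set M * W}) z p0 :
  p0 \in A -> endpoint z p0 -> util Pi z A < util_bound z ->
  blocks_opt Pi A [set z].
Proof.
move=> p0A zp0 lt_bound.
exists set0, ([set p in A | cross [set z] p] :\: [set p0]); split.
- by split; [exact: sub0set | exact: subsetDl].
- move=> k /set1P ->; exists p0.
  by rewrite zp0 !inE eqxx p0A cross_set1 zp0 !orbT.
- by move=> i /set1P ->; rewrite util_opt_outcome_set1 ltW.
- by exists z; rewrite ?set11 ?util_opt_outcome_set1.
Qed.

Lemma optimistic_stable_matched_util_max (A : {set M * W}) z p0 :
  optimistic_stable Pi A -> p0 \in A -> endpoint z p0 ->
  forall B, util Pi z B <= util Pi z A.
Proof.
move=> stA p0A zp0 B; apply: le_trans (util_le_bound z B) _.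
by rewrite leNgt; apply/negP => /(set1_blocks_opt p0A zp0) /stA.
Qed.

End OptimisticStableSet.

Theorem theorem6 (R : realDomainType) (M W : finType)
  (Pi : M -> W -> (M + W)%type -> R) (A : {set M * W}) :
  optimistic_stable Pi A ->
  exists (M' M'' : {set M}) (W' W'' : {set W}) (A' A'' : {set M * W}),
    [/\ M' :|: M'' = [set: M], W' :|: W'' = [set: W],
        A' \subset setX M' W' & A'' \subset setX M'' W''] /\
    [/\ [disjoint A' & A''], A = A' :|: A'' & A'' = set0] /\
    (forall m, m \in M' -> forall B : {set M * W},
        util Pi (inl m) B <= util Pi (inl m) A) /\
    (forall w, w \in W' -> forall B : {set M * W},
        util Pi (inr w) B <= util Pi (inr w) A).
Proof.
move=> stA.
exists [set m | [exists w, (m, w) \in A]], [set: M],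
  [set w | [exists m, (m, w) \in A]], [set: W], A, set0.
split; [|split; [|split]].
- rewrite !setUT sub0set; split=> //.
  by apply/subsetP => -[m w] mwA; rewrite !inE; apply/andP; split;
    apply/existsP; [exists w | exists m].
- by rewrite setU0 -setI_eq0 setI0.
- move=> m; rewrite inE => /existsP [w mwA].
  by apply: optimistic_stable_matched_util_max stA mwA _; rewrite /endpoint eqxx.
- move=> w; rewrite inE => /existsP [m mwA].
  by apply: optimistic_stable_matched_util_max stA mwA _; rewrite /endpoint eqxx orbT.
Qed.
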